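(* Let $T_l$ be a $2m$ deck-shuffler IET and $x\in[0,1)$. Then $x$ is periodic for $T_l$ with minimal period $n$ if and only if the sequence $\mathcal{H}_l(x)$ is periodic with minimal period $n$.
   Context: A $2m$ deck-shuffler IET $T_l$ is the map $[0,1)\to[0,1)$ determined by a length vector $l$ giving a partition of $[0,1)$ into consecutive left-closed right-open intervals $A_1<\dots<A_m<B_1<\dots<B_m$ of positive lengths, with $T_l(x)=x+|B_1|+\dots+|B_i|$ for $x\in A_i$ and $T_l(x)=x-|A_i|-\dots-|A_m|$ for $x\in B_i$. Let $B=B_1\cup\dots\cup B_m$. The coding $\mathcal{H}_l:[0,1)\to\{0,1\}^{\mathbb{Z}_{\ge0}}$ is $\mathcal{H}_l(x)=(\chi_B(T_l^n x))_{n\ge0}$; a sequence $(s_k)$ is periodic with minimal period $n$ if $s_{k+n}=s_k$ for all $k$ and $n$ is the least positive such integer. *)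

From Stdlib Require Import Reals.
Open Scope R_scope.

Fixpoint psum (f : nat -> R) (k : nat) : R :=
  match k with
  | O => 0
  | S k' => psum f k' + f k'
  end.

Definition ind (lo hi x : R) : R :=
  if Rle_dec lo x then (if Rlt_dec x hi then 1 else 0) else 0.

(* The length vector l is given by a : nat -> R (|A_{i+1}| = a i, i < m)
   and b : nat -> R (|B_{i+1}| = b i, i < m), 0-indexed. *)
Definition A_lo (m : nat) (a b : nat -> R) (i : nat) : R := psum a i.
Definition A_hi (m : nat) (a b : nat -> R) (i : nat) : R := psum a (S i).
Definition B_lo (m : nat) (a b : nat -> R) (i : nat) : R := psum a m + psum b i.
Definition B_hi (m : nat) (a b : nat -> R) (i : nat) : R := psum a m + psum b (S i).

Definition tailA (m : nat) (a : nat -> R) (i : nat) : R := psum a m - psum a i.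

(* On x in A_{i+1} it adds |B_1|+...+|B_{i+1}|,
   on x in B_{i+1} it subtracts |A_{i+1}|+...+|A_m|.  (The intervals are
   pairwise disjoint, so at most one indicator is nonzero; outside [0,1)
   T is the identity, which is irrelevant.) *)
Fixpoint shift_sum (m : nat) (a b : nat -> R) (x : R) (k : nat) : R :=
  match k with
  | O => 0
  | S i => shift_sum m a b x i
           + ind (A_lo m a b i) (A_hi m a b i) x * psum b (S i)
           - ind (B_lo m a b i) (B_hi m a b i) x * tailA m a i
  end.

Definition T (m : nat) (a b : nat -> R) (x : R) : R := x + shift_sum m a b x m.

Definition inB (m : nat) (a b : nat -> R) (x : R) : bool :=
  if Rle_dec (psum a m) x then (if Rlt_dec x 1 then true else false) else false.

Definition coding (m : nat) (a b : nat -> R) (x : R) : nat -> bool :=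
  fun k => inB m a b (Nat.iter k (T m a b) x).

Definition deck_lengths (m : nat) (a b : nat -> R) : Prop :=
  (forall i, (i < m)%nat -> 0 < a i) /\
  (forall i, (i < m)%nat -> 0 < b i) /\
  psum a m + psum b m = 1.

Definition periodic_point_min (f : R -> R) (x : R) (n : nat) : Prop :=
  (0 < n)%nat /\ Nat.iter n f x = x /\
  (forall k, (0 < k)%nat -> Nat.iter k f x = x -> (n <= k)%nat).

Definition seq_periodic_min {A : Type} (s : nat -> A) (n : nat) : Prop :=
  (0 < n)%nat /\ (forall k, s (k + n)%nat = s k) /\
  (forall p, (0 < p)%nat -> (forall k, s (k + p)%nat = s k) -> (n <= p)%nat).

(* On each A_i and each B_i the map T is a translation, and within each colour the
   translation amounts are nondecreasing in i; hence T moves two points of the same colour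
   at least as far apart as they were.  If the coding of x repeats with period p but
   T^p x <> x, the gap between T^k x and T^(k+p) x therefore never shrinks and keeps its
   sign, so the points T^(jp) x drift monotonically by at least j |T^p x - x|, which is
   impossible inside [0,1).  Conversely a periodic point obviously has a periodic coding,
   so the two sets of periods, and hence their minima, coincide. *)
From Stdlib Require Import Reals Arith Lia Lra.
Open Scope R_scope.

Lemma psum_le (f : nat -> R) (i j : nat) :
  (forall k, (k < j)%nat -> 0 <= f k) -> (i <= j)%nat -> psum f i <= psum f j.
Proof.
  intros Hf Hij; induction j as [|j IH].
  - replace i with 0%nat by lia; lra.
  - destruct (Nat.eq_dec i (S j)) as [->|Hne]; [lra|].
    simpl; assert (0 <= f j) by (apply Hf; lia).
    assert (psum f i <= psum f j) by (apply IH; [intros; apply Hf|]; lia).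
    lra.
Qed.

Lemma psum_locate (f : nat -> R) (n : nat) (x : R) :
  (forall k, (k < n)%nat -> 0 < f k) -> 0 <= x < psum f n ->
  exists i, (i < n)%nat /\ psum f i <= x < psum f (S i).
Proof.
  intros Hf Hx; induction n as [|n IH]; simpl in Hx; [lra|].
  destruct (Rlt_dec x (psum f n)).
  - destruct IH as [i [Hi Hxi]]; [intros; apply Hf; lia | lra |].
    exists i; split; [lia | lra].
  - exists n; split; [lia | simpl; lra].
Qed.

Lemma psum_index_le (f : nat -> R) (i j : nat) (x y : R) :
  (forall k, (k < i)%nat -> 0 <= f k) ->
  psum f i <= x -> x <= y -> y < psum f (S j) -> (i <= j)%nat.
Proof.
  intros Hf Hx Hxy Hy; destruct (Nat.le_gt_cases i j) as [|Hji]; [assumption|].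
  assert (psum f (S j) <= psum f i) by (apply psum_le; [intros; apply Hf|]; lia).
  lra.
Qed.

Lemma psum_single (f : nat -> R) (i k : nat) :
  (forall j, (j < k)%nat -> j <> i -> f j = 0) -> (i < k)%nat -> psum f k = f i.
Proof.
  intros Hf Hik; induction k as [|k IH]; [lia|]; simpl.
  destruct (Nat.eq_dec k i) as [->|Hne].
  - assert (Hzero : forall j, (j <= i)%nat -> psum f j = 0).
    { induction j as [|j IH']; intros Hj; simpl; [reflexivity|].
      rewrite IH', Hf by lia; lra. }
    rewrite Hzero by lia; lra.
  - rewrite IH, (Hf k) by (intros; try apply Hf; lia); lra.
Qed.

Lemma ind_in (lo hi x : R) : lo <= x < hi -> ind lo hi x = 1.
Proof. intros Hx; unfold ind; destruct (Rle_dec lo x), (Rlt_dec x hi); lra. Qed.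

Lemma ind_out (lo hi x : R) : x < lo \/ hi <= x -> ind lo hi x = 0.
Proof. intros Hx; unfold ind; destruct (Rle_dec lo x), (Rlt_dec x hi); lra. Qed.

Section DeckShuffler.

Variables (m : nat) (a b : nat -> R).
Hypothesis deck : deck_lengths m a b.

Definition shift_term (x : R) (j : nat) : R :=
  ind (A_lo m a b j) (A_hi m a b j) x * psum b (S j)
  - ind (B_lo m a b j) (B_hi m a b j) x * tailA m a j.

Lemma shift_sum_psum (x : R) (k : nat) : shift_sum m a b x k = psum (shift_term x) k.
Proof. induction k as [|k IH]; simpl; [reflexivity|]; rewrite IH; unfold shift_term; simpl; ring. Qed.

Lemma psum_a_le (i j : nat) : (i <= j <= m)%nat -> psum a i <= psum a j.
Proof.
  destruct deck as [Ha _]; intros Hij.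
  apply psum_le; [intros; left; apply Ha|]; lia.
Qed.

Lemma psum_b_le (i j : nat) : (i <= j <= m)%nat -> psum b i <= psum b j.
Proof.
  destruct deck as [_ [Hb _]]; intros Hij.
  apply psum_le; [intros; left; apply Hb|]; lia.
Qed.

Lemma ind_A_off (i j : nat) (x : R) :
  (i < m)%nat -> (j < m)%nat -> j <> i -> psum a i <= x < psum a (S i) ->
  ind (A_lo m a b j) (A_hi m a b j) x = 0.
Proof.
  intros Hi Hj Hji Hx; unfold A_lo, A_hi; apply ind_out.
  destruct (Nat.lt_gt_cases j i) as [[Hlt|Hgt] _]; [assumption | |].
  - assert (psum a (S j) <= psum a i) by (apply psum_a_le; lia); right; lra.
  - assert (psum a (S i) <= psum a j) by (apply psum_a_le; lia); left; lra.
Qed.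

Lemma ind_B_off (i j : nat) (x : R) :
  (i < m)%nat -> (j < m)%nat -> j <> i -> psum a m + psum b i <= x < psum a m + psum b (S i) ->
  ind (B_lo m a b j) (B_hi m a b j) x = 0.
Proof.
  intros Hi Hj Hji Hx; unfold B_lo, B_hi; apply ind_out.
  destruct (Nat.lt_gt_cases j i) as [[Hlt|Hgt] _]; [assumption | |].
  - assert (psum b (S j) <= psum b i) by (apply psum_b_le; lia); right; lra.
  - assert (psum b (S i) <= psum b j) by (apply psum_b_le; lia); left; lra.
Qed.

Lemma ind_B_on_A (j : nat) (x : R) :
  (j < m)%nat -> x < psum a m -> ind (B_lo m a b j) (B_hi m a b j) x = 0.
Proof.
  intros Hj Hx; unfold B_lo; apply ind_out.
  assert (0 <= psum b j) by (apply (psum_b_le 0); lia); left; lra.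
Qed.

Lemma ind_A_on_B (j : nat) (x : R) :
  (j < m)%nat -> psum a m <= x -> ind (A_lo m a b j) (A_hi m a b j) x = 0.
Proof.
  intros Hj Hx; unfold A_hi; apply ind_out.
  assert (psum a (S j) <= psum a m) by (apply psum_a_le; lia); right; lra.
Qed.

Lemma T_on_A (i : nat) (x : R) :
  (i < m)%nat -> psum a i <= x < psum a (S i) -> T m a b x = x + psum b (S i).
Proof.
  intros Hi Hx.
  assert (HxA : x < psum a m) by (assert (psum a (S i) <= psum a m) by (apply psum_a_le; lia); lra).
  unfold T; rewrite shift_sum_psum, (psum_single _ i); [| | assumption].
  - unfold shift_term; rewrite ind_in, ind_B_on_A by (unfold A_lo, A_hi; lra || assumption); ring.
  - intros j Hj Hji; unfold shift_term.
    rewrite (ind_A_off i j), ind_B_on_A by assumption; ring.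
Qed.

Lemma T_on_B (i : nat) (x : R) :
  (i < m)%nat -> psum a m + psum b i <= x < psum a m + psum b (S i) ->
  T m a b x = x - tailA m a i.
Proof.
  intros Hi Hx.
  assert (HxB : psum a m <= x) by (assert (0 <= psum b i) by (apply (psum_b_le 0); lia); lra).
  unfold T; rewrite shift_sum_psum, (psum_single _ i); [| | assumption].
  - unfold shift_term; rewrite ind_A_on_B, ind_in by (unfold B_lo, B_hi; lra || assumption); ring.
  - intros j Hj Hji; unfold shift_term.
    rewrite (ind_B_off i j), ind_A_on_B by assumption; ring.
Qed.

Lemma locate_A (x : R) : 0 <= x < psum a m ->
  exists i, (i < m)%nat /\ psum a i <= x < psum a (S i).
Proof. destruct deck as [Ha _]; apply psum_locate; assumption. Qed.

Lemma locate_B (x : R) : psum a m <= x < 1 ->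
  exists i, (i < m)%nat /\ psum a m + psum b i <= x < psum a m + psum b (S i).
Proof.
  destruct deck as [_ [Hb Hsum]]; intros Hx.
  destruct (psum_locate b m (x - psum a m)) as [i [Hi Hxi]]; [assumption | lra |].
  exists i; split; [assumption | lra].
Qed.

Lemma inB_A (x : R) : x < psum a m -> inB m a b x = false.
Proof. intros Hx; unfold inB; destruct (Rle_dec (psum a m) x); [lra | reflexivity]. Qed.

Lemma inB_B (x : R) : psum a m <= x < 1 -> inB m a b x = true.
Proof. intros Hx; unfold inB; destruct (Rle_dec (psum a m) x), (Rlt_dec x 1); first [reflexivity | lra]. Qed.

Lemma T_maps_unit (x : R) : 0 <= x < 1 -> 0 <= T m a b x < 1.
Proof.
  intros Hx; pose proof deck as [_ [_ Hsum]].
  destruct (Rlt_le_dec x (psum a m)).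
  - destruct (locate_A x) as [i [Hi Hxi]]; [lra|]; rewrite (T_on_A i) by assumption.
    assert (psum a (S i) <= psum a m) by (apply psum_a_le; lia).
    assert (0 <= psum b (S i) <= psum b m) by (split; [apply (psum_b_le 0) | apply psum_b_le]; lia).
    lra.
  - destruct (locate_B x) as [i [Hi Hxi]]; [lra|]; rewrite (T_on_B i) by assumption.
    unfold tailA.
    assert (0 <= psum a i <= psum a m) by (split; [apply (psum_a_le 0) | apply psum_a_le]; lia).
    assert (0 <= psum b i) by (apply (psum_b_le 0); lia).
    lra.
Qed.

Lemma T_expands_same_colour (u v : R) :
  0 <= u < 1 -> 0 <= v < 1 -> inB m a b u = inB m a b v -> u < v ->
  v - u <= T m a b v - T m a b u.
Proof.
  intros Hu Hv Hcol Huv; pose proof deck as [Ha [Hb _]].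
  destruct (Rlt_le_dec u (psum a m)), (Rlt_le_dec v (psum a m));
    try lra; try (rewrite inB_A, inB_B in Hcol by lra; discriminate).
  - destruct (locate_A u) as [i [Hi Hui]]; [lra|].
    destruct (locate_A v) as [j [Hj Hvj]]; [lra|].
    rewrite (T_on_A i u), (T_on_A j v) by assumption.
    assert (i <= j)%nat by (apply (psum_index_le a i j u v);
                            [intros; left; apply Ha | | |]; lra || lia).
    assert (psum b (S i) <= psum b (S j)) by (apply psum_b_le; lia).
    lra.
  - destruct (locate_B u) as [i [Hi Hui]]; [lra|].
    destruct (locate_B v) as [j [Hj Hvj]]; [lra|].
    rewrite (T_on_B i u), (T_on_B j v) by assumption; unfold tailA.
    assert (i <= j)%nat by (apply (psum_index_le b i j (u - psum a m) (v - psum a m));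
                            [intros; left; apply Hb | | |]; lra || lia).
    assert (psum a i <= psum a j) by (apply psum_a_le; lia).
    lra.
Qed.

End DeckShuffler.

Section ExpandingColouredMap.

Variables (f : R -> R) (colour : R -> bool).
Hypothesis f_maps_unit : forall x, 0 <= x < 1 -> 0 <= f x < 1.
Hypothesis f_expands : forall u v, 0 <= u < 1 -> 0 <= v < 1 ->
  colour u = colour v -> u < v -> v - u <= f v - f u.

Lemma iter_maps_unit (x : R) (k : nat) : 0 <= x < 1 -> 0 <= Nat.iter k f x < 1.
Proof. intros Hx; induction k as [|k IH]; simpl; auto. Qed.

Lemma iter_expands (u v : R) :
  0 <= u < 1 -> 0 <= v < 1 ->
  (forall k, colour (Nat.iter k f u) = colour (Nat.iter k f v)) -> u < v ->
  forall k, v - u <= Nat.iter k f v - Nat.iter k f u.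
Proof.
  intros Hu Hv Hcol Huv k; induction k as [|k IH]; simpl; [lra|].
  assert (Nat.iter k f v - Nat.iter k f u <= f (Nat.iter k f v) - f (Nat.iter k f u))
    by (apply f_expands; auto using iter_maps_unit; lra).
  lra.
Qed.

Lemma no_uniform_drift (Y : nat -> R) (p : nat) (d : R) :
  0 < d -> (forall k, Y k + d <= Y (k + p)%nat) -> exists k, Y 0%nat + 1 <= Y k.
Proof.
  intros Hd Hdrift.
  assert (Hj : forall j, Y 0%nat + INR j * d <= Y (j * p)%nat).
  { induction j as [|j IH]; [simpl; lra|].
    rewrite S_INR; replace (S j * p)%nat with (j * p + p)%nat by lia.
    specialize (Hdrift (j * p)%nat); lra. }
  destruct (INR_unbounded (1 / d)) as [j Hjd].
  exists (j * p)%nat; specialize (Hj j).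
  assert (1 <= INR j * d) by
    (apply Rmult_gt_compat_r with (r := d) in Hjd; [field_simplify in Hjd|]; lra).
  lra.
Qed.

Lemma periodic_colouring_periodic (x : R) (p : nat) : 0 <= x < 1 ->
  (forall k, colour (Nat.iter (k + p) f x) = colour (Nat.iter k f x)) ->
  Nat.iter p f x = x.
Proof.
  intros Hx Hcol; set (y := Nat.iter p f x).
  assert (Hy : 0 <= y < 1) by (apply iter_maps_unit; assumption).
  assert (Hshift : forall k, Nat.iter (k + p) f x = Nat.iter k f y)
    by (intros; apply Nat.iter_add).
  assert (Hrange : forall k, 0 <= Nat.iter k f x < 1) by (intros; apply iter_maps_unit; assumption).
  assert (Hcol_xy : forall k, colour (Nat.iter k f x) = colour (Nat.iter k f y))
    by (intros k; rewrite <- Hshift; symmetry; apply Hcol).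
  destruct (Rtotal_order x y) as [Hxy|[Hxy|Hyx]]; [exfalso | auto | exfalso].
  - destruct (no_uniform_drift (fun k => Nat.iter k f x) p (y - x)) as [k Hk]; [lra| |].
    + intros k; rewrite Hshift.
      pose proof (iter_expands x y Hx Hy Hcol_xy Hxy k).
      lra.
    + specialize (Hrange k); simpl in Hk; lra.
  - destruct (no_uniform_drift (fun k => - Nat.iter k f x) p (x - y)) as [k Hk]; [lra| |].
    + intros k; rewrite Hshift.
      pose proof (iter_expands y x Hy Hx (fun k => eq_sym (Hcol_xy k)) Hyx k).
      lra.
    + specialize (Hrange k); simpl in Hk; lra.
Qed.

End ExpandingColouredMap.

Lemma iter_periodic_shift {X A : Type} (f : X -> X) (c : X -> A) (x : X) (p : nat) :
  Nat.iter p f x = x -> forall k, c (Nat.iter (k + p) f x) = c (Nat.iter k f x).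
Proof. intros Hp k; rewrite Nat.iter_add, Hp; reflexivity. Qed.

Lemma T_periodic_iff_coding_periodic (m : nat) (a b : nat -> R) (x : R) (p : nat) :
  deck_lengths m a b -> 0 <= x < 1 ->
  Nat.iter p (T m a b) x = x <-> (forall k, coding m a b x (k + p) = coding m a b x k).
Proof.
  intros deck Hx; unfold coding; split.
  - apply iter_periodic_shift.
  - apply periodic_colouring_periodic; auto using T_maps_unit, T_expands_same_colour.
Qed.

Theorem lemma4 (m : nat) (a b : nat -> R) (x : R) (n : nat) :
  deck_lengths m a b ->
  0 <= x < 1 ->
  (periodic_point_min (T m a b) x n <-> seq_periodic_min (coding m a b x) n).
Proof.
  intros deck Hx; pose proof (T_periodic_iff_coding_periodic m a b x) as Hper.
  unfold periodic_point_min, seq_periodic_min; split.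
  - intros [Hn [Hp Hmin]]; repeat split; [assumption | apply Hper; auto |].
    intros p Hp0 Hcod; apply Hmin; [assumption | apply Hper; auto].
  - intros [Hn [Hp Hmin]]; repeat split; [assumption | apply Hper; auto |].
    intros p Hp0 Hiter; apply Hmin; [assumption | apply Hper; auto].
Qed.
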